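(* Let $T$ be a DAT with duration vector $d$, let $v$ be a module of $T$, and let $T^v$, $\tilde v$, $d^v$ be as defined below, and assume $\mathrm{mt}(T_v,d|_{B_v})<\infty$. Then for every successful attack $\mathcal{O}$ on $T^v$ there exists a successful attack $\mathcal{O}'$ on $T$ with $\mathrm{t}(\mathcal{O}',d)=\mathrm{t}(\mathcal{O},d^v)$.
   Context: A dynamic attack tree (DAT) is a finite rooted directed acyclic graph $T=(N,E)$ (edges point from a node to its children) with root $\mathrm{R}_T$, in which each node $v$ has a type $\gamma(v)\in\{\mathtt{BAS},\mathtt{OR},\mathtt{AND},\mathtt{SAND}\}$, with $\gamma(v)=\mathtt{BAS}$ if and only if $v$ is a leaf. Every node of type $\mathtt{SAND}$ comes with a fixed linear ordering $v_1,\dots,v_n$ of its children, written $v=\mathtt{SAND}(v_1,\dots,v_n)$; similarly one writes $v=\mathtt{OR}(v_1,\dots,v_n)$, $v=\mathtt{AND}(v_1,\dots,v_n)$. $N_\gamma$ denotes the set of nodes of type $\gamma$. For a node $v$, $T_v$ is the sub-DAG induced on the descendants of $v$ (all nodes reachable from $v$ by a directed path, including $v$), rooted at $v$, with the inherited types and orderings, and $B_v$ is the set of nodes of $T_v$ of type $\mathtt{BAS}$. A module of $T$ is a node $v\in N\setminus N_{\mathtt{BAS}}$ such that every directed path from a node outside $T_v$ to a node of $T_v$ passes through $v$; equivalently, every node of $T_v$ other than $v$ has all its parents inside $T_v$. An attack on $T$ is a pair $\mathcal{O}=(A,\prec)$ where $A\subseteq N_{\mathtt{BAS}}$ and $\prec$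 is a strict partial order on $A$. An attack $(A,\prec)$ reaches a node $v$, defined recursively: if $v\in N_{\mathtt{BAS}}$, iff $v\in A$; if $v=\mathtt{OR}(v_1,\dots,v_n)$, iff it reaches some $v_i$; if $v=\mathtt{AND}(v_1,\dots,v_n)$, iff it reaches all $v_i$; if $v=\mathtt{SAND}(v_1,\dots,v_n)$, iff it reaches all $v_i$ and for every $i<n$, every $a\in A\cap B_{v_i}$ and every $a'\in A\cap B_{v_{i+1}}$ one has $a\prec a'$. An attack is successful if it reaches the root. A duration vector is $d\in\mathbb{R}_{\ge0}^{N_{\mathtt{BAS}}}$. For an attack $\mathcal{O}=(A,\prec)$, $\mathrm{t}(\mathcal{O},d)=\max_C\sum_{a\in C}d_a$, the maximum over all maximal chains $C$ of $(A,\prec)$ (equal to $0$ if $A=\varnothing$). The min time $\mathrm{mt}(T,d)$ is the minimum of $\mathrm{t}(\mathcal{O},d)$ over successful attacks $\mathcal{O}$ on $T$ ($\infty$ if there are none). For a module $v$: $T^v$ is the DAT obtained from $T$ by deleting all nodes of $T_v$ other than $v$ (with their incident edges) and turning $v$ into a new leaf $\tilde v$ of type $\mathtt{BAS}$ (keeping its incoming edges and its position in the child orderings of its $\mathtt{SAND}$-parents); $d^v$ is the duration vector on the BASes of $T^v$ given by $d^v_a=d_a$ for $a\in N_{\mathtt{BAS}}\setminus B_v$ and $d^v_{\tilde v}=\mathrm{mt}(T_v,d|_{B_v})$. *)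

From HB Require Import structures.
From mathcomp Require Import all_boot all_order all_algebra.
From mathcomp Require Import boolp reals constructive_ereal.
Set Implicit Arguments. Unset Strict Implicit. Unset Printing Implicit Defensive.
Import Order.TTheory GRing.Theory Num.Theory.
Local Open Scope ring_scope.

Inductive gtype := BAS | OR | AND | SAND.
Definition is_bas (g : gtype) : bool := if g is BAS then true else false.

Section DAT.
Variable N : finType.

(* A DAT over the node universe N: node set, root, type of each node and the
   ordered list of children of each node (the list order is the SAND order). *)
Record dat := Dat {
  nodes : {set N};
  root : N;
  typ : N -> gtype;
  kids : N -> seq N }.

Definition edge (T : dat) : rel N := fun u w => (u \in nodes T) && (w \in kids T u).

Definition wf_dat (T : dat) : Prop :=
  root T \in nodes T /\
  [/\ (forall u, u \in nodes T -> {subset kids T u <= nodes T}),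
      (forall u, u \in nodes T -> uniq (kids T u)),
      (forall u, u \in nodes T -> (typ T u = BAS <-> kids T u = [::])),
      (forall u w, edge T u w -> ~~ connect (edge T) w u) &
      (forall u, u \in nodes T -> connect (edge T) (root T) u)].

Definition desc (T : dat) (u : N) : {set N} := [set w | connect (edge T) u w].
Definition bas (T : dat) : {set N} := [set u in nodes T | is_bas (typ T u)].
Definition Bset (T : dat) (u : N) : {set N} := desc T u :&: bas T.

Definition subdat (T : dat) (u : N) : dat :=
  Dat (desc T u) u (typ T) (kids T).

Definition is_module (T : dat) (v : N) : Prop :=
  [/\ v \in nodes T, ~~ is_bas (typ T v) &
      forall u w, edge T u w -> w \in desc T v -> w != v -> u \in desc T v].

(* T^v : delete the strict descendants of v and turn v into a leaf
   (the new leaf ~v is represented by the node name v itself). *)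
Definition quotdat (T : dat) (v : N) : dat :=
  Dat ((nodes T :\: desc T v) :|: [set v]) (root T)
      (fun u => if u == v then BAS else typ T u)
      (fun u => if u == v then [::] else kids T u).

Definition attack := ({set N} * {set N * N})%type.
Definition aset (O : attack) : {set N} := O.1.
Definition prec (O : attack) (a b : N) : bool := (a, b) \in O.2.

Definition is_attack (T : dat) (O : attack) : Prop :=
  [/\ aset O \subset bas T,
      O.2 \subset setX (aset O) (aset O),
      (forall a, a \in aset O -> ~~ prec O a a) &
      (forall a b c, a \in aset O -> b \in aset O -> c \in aset O ->
         prec O a b -> prec O b c -> prec O a c)].

Definition sand_ok (T : dat) (O : attack) (u : N) : Prop :=
  forall i, (i.+1 < size (kids T u))%N ->
  forall a a', a \in aset O -> a' \in aset O ->
    a \in Bset T (nth u (kids T u) i) -> a' \in Bset T (nth u (kids T u) i.+1) ->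
    prec O a a'.

(* O reaches node u (least fixpoint of the recursive definition; on a finite
   DAG this coincides with the recursive definition). *)
Inductive reaches (T : dat) (O : attack) : N -> Prop :=
| reach_bas u : typ T u = BAS -> u \in aset O -> reaches T O u
| reach_or u w : typ T u = OR -> w \in kids T u -> reaches T O w -> reaches T O u
| reach_and u : typ T u = AND -> (forall w, w \in kids T u -> reaches T O w) ->
    reaches T O u
| reach_sand u : typ T u = SAND -> (forall w, w \in kids T u -> reaches T O w) ->
    sand_ok T O u -> reaches T O u.

Definition successful (T : dat) (O : attack) : Prop :=
  is_attack T O /\ reaches T O (root T).

Definition chain (O : attack) (C : {set N}) : bool :=
  (C \subset aset O) &&
  [forall a in C, forall b in C, [|| a == b, prec O a b | prec O b a]].
Definition max_chain (O : attack) (C : {set N}) : bool :=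
  chain O C && [forall D : {set N}, (chain O D && (C \subset D)) ==> (D == C)].

Variable R : realType.

(* t(O, d) : maximum over maximal chains of the total duration (0 if A empty) *)
Definition attack_time (O : attack) (d : N -> R) : R :=
  \big[Num.max/0]_(C : {set N} | max_chain O C) \sum_(a in C) d a.

Definition min_time (T : dat) (d : N -> R) : \bar R :=
  \big[Order.min/+oo%E]_(O : attack | `[< successful T O >]) (attack_time O d)%:E.

Definition dur_quot (T : dat) (v : N) (d : N -> R) : N -> R :=
  fun a => if a == v then fine (min_time (subdat T v) d) else d a.

End DAT.

(* Take an attack Ov on T_v of minimal time, which exists because mt(T_v) is
   finite, and substitute it for the leaf ~v of O: inside T_v use the order of
   Ov, and order any other pair as its image in T^v (all of T_v collapsed to v)
   is ordered by O.  Since v is a module, every edge entering T_v ends at v, so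
   the nodes reached by O in T^v are reached by the new attack in T.  A chain of
   the new attack meets T_v in a chain of Ov and collapses to a chain of O;
   conversely a chain of O through ~v expands by a heaviest chain of Ov.  With
   nonnegative durations the maximum over maximal chains is the maximum over all
   chains, so the two attack times coincide. *)

From Pilot Require Import Defs.
From HB Require Import structures.
From mathcomp Require Import all_boot all_order all_algebra.
From mathcomp Require Import boolp reals constructive_ereal.
Import Order.TTheory GRing.Theory Num.Theory.
Set Implicit Arguments. Unset Strict Implicit. Unset Printing Implicit Defensive.
Local Open Scope ring_scope.

Section ChainTime.
Variables (R : realType) (N : finType).
Implicit Types (O : attack N) (C D : {set N}) (w : N -> R).

Lemma chainP O C :
  reflect ({subset C <= aset O} /\
           {in C &, forall a b, [|| a == b, prec O a b | prec O b a]})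
          (chain O C).
Proof.
apply: (iffP andP) => [[/subsetP sCA /'forall_in_forall_inP cmpC] | [sCA cmpC]].
  by split=> // a b aC bC; apply: cmpC.
split; first exact/subsetP.
by apply/'forall_in_forall_inP => a b aC bC; apply: cmpC.
Qed.

Lemma chain0 O : chain O set0.
Proof. by apply/chainP; split=> [a|a b]; rewrite inE. Qed.

Lemma chain_sub_max_chain O C : chain O C -> exists2 D, max_chain O D & C \subset D.
Proof.
move=> chC.
have [D /andP[chD sCD] Dmax] :=
  @arg_maxnP _ C (fun D => chain O D && (C \subset D)) (fun D => #|D|)
    (introT andP (conj chC (subxx C))).
exists D => //; apply/andP; split=> //.
apply/forall_inP => D' /andP[chD' sDD']; rewrite eq_sym eqEcard sDD'.
by apply: Dmax; rewrite chD' (subset_trans sCD sDD').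
Qed.

Definition chain_time O w : R :=
  \big[Num.max/0]_(C | chain O C) \sum_(a in C) w a.

Lemma sum_le_chain_time O w C : chain O C -> \sum_(a in C) w a <= chain_time O w.
Proof. by move=> chC; rewrite /chain_time (bigD1 C) //= le_max lexx. Qed.

Lemma chain_time_le O w x :
  0 <= x -> (forall C, chain O C -> \sum_(a in C) w a <= x) -> chain_time O w <= x.
Proof.
move=> x_ge0 sum_le; rewrite /chain_time; elim/big_ind: _ => //.
by move=> y z yx zx; rewrite ge_max yx zx.
Qed.

Lemma chain_time_ge0 O w : 0 <= chain_time O w.
Proof. by have := sum_le_chain_time w (chain0 O); rewrite big_set0. Qed.

Lemma chain_time_witness O w :
  exists2 C, chain O C & chain_time O w = \sum_(a in C) w a.
Proof.
suff [->|//] : chain_time O w = 0 \/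
    exists2 C, chain O C & chain_time O w = \sum_(a in C) w a.
  by exists set0; rewrite ?big_set0 ?chain0.
rewrite /chain_time; elim/big_ind: _ => [|x y hx hy|C chC].
- by left.
- by rewrite /Num.max; case: ifP.
- by right; exists C.
Qed.

Lemma attack_time_ge0 O w : 0 <= attack_time O w.
Proof.
by rewrite /attack_time; elim/big_rec: _ => // C x _ x_ge0; rewrite le_max x_ge0 orbT.
Qed.

(* With nonnegative durations a chain weighs at most any maximal chain
   containing it. *)
Lemma attack_time_chain_time O w :
  {in aset O, forall a, 0 <= w a} -> attack_time O w = chain_time O w.
Proof.
move=> w_ge0; apply/le_anti/andP; split.
  rewrite /attack_time; elim/big_ind: _ => [|x y hx hy|C /andP[chC _]].
  - exact: chain_time_ge0.
  - by rewrite ge_max hx hy.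
  - exact: sum_le_chain_time.
apply: chain_time_le => [|C chC]; first exact: attack_time_ge0.
have [D maxD sCD] := chain_sub_max_chain chC.
have /andP[/chainP[sDA _] _] := maxD; apply: le_trans (_ : \sum_(a in D) w a <= _).
  rewrite [leRHS](big_setID C) /= (setIidPr sCD) lerDl.
  by apply: sumr_ge0 => a /setDP[/sDA /w_ge0].
by rewrite /attack_time (bigD1 D) //= le_max lexx.
Qed.

End ChainTime.

Definition collapse (N : finType) (T : dat N) (v x : N) : N :=
  if x \in desc T v then v else x.

Section Descendants.
Variables (N : finType) (T : dat N).
Hypothesis wfT : wf_dat T.

Lemma desc_refl v : v \in desc T v.
Proof. by rewrite inE connect0. Qed.

Lemma connect_nodes x y : x \in nodes T -> connect (edge T) x y -> y \in nodes T.
Proof.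
have [_ [kidsT _ _ _ _]] := wfT.
move=> xT /connectP[p + ->]; elim: p x xT => //= z p IHp x xT.
by case/andP=> /andP[_ /(kidsT x xT) zT] /(IHp z zT).
Qed.

Lemma desc_kid v u w : v \in nodes T -> u \in desc T v -> w \in kids T u -> w \in desc T v.
Proof.
rewrite !inE => vT vu uw; apply: (connect_trans vu (connect1 _)).
by rewrite /edge uw (connect_nodes vT vu).
Qed.

Lemma connect_subdat v x y :
  x \in desc T v -> connect (edge T) x y -> connect (edge (subdat T v)) x y.
Proof.
move=> vx /connectP[p + ->]; elim: p x vx => //= z p IHp x vx.
case/andP=> xz /(IHp z) zy.
have vz : z \in desc T v by rewrite inE (connect_trans _ (connect1 xz)) -?inE.
by apply: connect_trans (zy vz); apply: connect1; rewrite /edge /= vx; case/andP: xz.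
Qed.

Lemma Bset_subdat v w x :
  w \in desc T v -> x \in Bset T w -> x \in Bset (subdat T v) w.
Proof.
rewrite /Bset /bas !inE => vw /andP[wx /andP[_ xbas]].
have vx : connect (edge T) v x := connect_trans vw wx.
by rewrite xbas vx connect_subdat ?inE.
Qed.

Lemma collapse_desc v a : a \in desc T v -> collapse T v a = v.
Proof. by rewrite /collapse => ->. Qed.

Lemma collapse_ndesc v a : a \notin desc T v -> collapse T v a = a.
Proof. by rewrite /collapse => /negbTE ->. Qed.

Lemma eq_collapse v a b : ~~ ((a \in desc T v) && (b \in desc T v)) ->
  (collapse T v a == collapse T v b) = (a == b).
Proof.
rewrite /collapse; case: (boolP (a \in _)) => va; case: (boolP (b \in _)) => vb //= _.
- by apply/idP/idP => /eqP e; move: vb; rewrite -e ?va ?desc_refl.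
- by apply/idP/idP => /eqP e; move: va; rewrite e ?vb ?desc_refl.
Qed.

Lemma reaches_subdat v (Ov O : attack N) u :
  v \in nodes T ->
  {subset aset Ov <= aset O} ->
  {in aset Ov &, forall a b, prec Ov a b -> prec O a b} ->
  {in aset O, forall a, a \in desc T v -> a \in aset Ov} ->
  reaches (subdat T v) Ov u -> u \in desc T v -> reaches T O u.
Proof.
move=> vT subA precOvO backA; elim=> {u} /= [u|u w|u|u].
- by move=> ubas uA _; apply: reach_bas => //; apply: subA.
- by move=> uor uw _ IHw vu; apply: reach_or uor uw (IHw (desc_kid vT vu uw)).
- by move=> uand _ IH vu; apply: reach_and => // w uw; apply: IH (desc_kid vT vu uw).
move=> usand _ IH sandu vu; apply: reach_sand => [//|w uw|i ilt a a' aA a'A aB a'B].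
  exact: IH (desc_kid vT vu uw).
have Bsub j x : (j < size (kids T u))%N -> x \in aset O ->
    x \in Bset T (nth u (kids T u) j) ->
    x \in aset Ov /\ x \in Bset (subdat T v) (nth u (kids T u) j).
  move=> jlt xA xB; have vj := desc_kid vT vu (mem_nth u jlt).
  have xsub := Bset_subdat vj xB; split=> //; apply: backA xA _.
  by move: xsub; rewrite /Bset /bas !inE => /andP[_ /andP[]].
have [aOv aB'] := Bsub i a (ltnW ilt) aA aB.
have [a'Ov a'B'] := Bsub i.+1 a' ilt a'A a'B.
exact: precOvO (sandu i ilt a a' aOv a'Ov aB' a'B').
Qed.

End Descendants.

Section Module.
Variables (N : finType) (T : dat N) (v : N).
Hypotheses (wfT : wf_dat T) (modv : is_module T v).

Lemma quotdat_nodes u :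
  u \in nodes (quotdat T v) -> u != v -> u \in nodes T /\ u \notin desc T v.
Proof. by rewrite /= !inE => /orP[/andP[-> ->] | ->]. Qed.

Lemma quotdat_kid u w :
  u \in nodes (quotdat T v) -> u != v -> w \in kids T u -> w \in nodes (quotdat T v).
Proof.
have [_ [kidsT _ _ _ _]] := wfT; have [_ _ closed_v] := modv.
move=> uq uv uw; have [uT nvu] := quotdat_nodes uq uv.
rewrite /= in_setU in_setD in_set1 (kidsT u uT w uw) andbT orbC; have [//|wv /=] := eqVneq w v.
by apply: contra nvu => vw; apply: closed_v vw wv; rewrite /edge uT.
Qed.

Lemma root_quotdat : Defs.root T \in nodes (quotdat T v).
Proof.
have [rootT [_ _ _ acyclic rooted]] := wfT; have [vT _ _] := modv.
rewrite /= !inE rootT andbT orbC; have [//|rv /=] := eqVneq (Defs.root T) v.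
apply/negP => vr; move/connectP: (rooted v vT) => [[|z p] /=].
  by move=> _ vr'; case/eqP: rv.
case/andP=> rz zp vlast; have zv : connect (edge T) z v by apply/connectP; exists p.
by move: (acyclic _ _ rz); rewrite (connect_trans zv vr).
Qed.

Lemma connect_quotdat x y : x \notin desc T v -> connect (edge T) x y ->
  connect (edge (quotdat T v)) x (collapse T v y).
Proof.
have [_ _ closed_v] := modv.
move=> nvx /connectP[p + ->]; elim: p x nvx => /= [|z p IHp] x nvx.
  by rewrite /collapse (negbTE nvx).
case/andP=> xz zp; have xv : x != v by apply: contraNneq nvx => ->; apply: desc_refl.
have xq : x \in nodes (quotdat T v) by rewrite /= in_setU in_setD nvx; case/andP: xz => ->.
have xqz : edge (quotdat T v) x z by rewrite /edge xq /= (negbTE xv); case/andP: xz.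
have [vz | nvz] := boolP (z \in desc T v).
  have zv : z = v by apply/eqP; apply: contraNT nvx; apply: closed_v xz vz.
  suff -> : collapse T v (last z p) = z by apply: connect1.
  by rewrite /collapse ifT -?zv // inE; apply/connectP; exists p.
exact: connect_trans (connect1 xqz) (IHp z nvz zp).
Qed.

Lemma desc_quotdat_collapse w x : w \in nodes (quotdat T v) -> x \in Bset T w ->
  collapse T v x \in desc (quotdat T v) w.
Proof.
move=> wq /setIP[wx _]; rewrite inE.
have [wv | nwv] := eqVneq w v.
  by rewrite /collapse ifT -wv // connect0.
have [_ nvw] := quotdat_nodes wq nwv; rewrite inE in wx.
exact: connect_quotdat nvw wx.
Qed.

Lemma reaches_quotdat (O O' : attack N) u :
  aset O \subset bas (quotdat T v) ->
  (v \in aset O -> reaches T O' v) ->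
  {in aset O, forall a, a != v -> a \in aset O'} ->
  {in aset O', forall a, collapse T v a \in aset O} ->
  {in aset O' &, forall a b, prec O (collapse T v a) (collapse T v b) -> prec O' a b} ->
  reaches (quotdat T v) O u -> u \in nodes (quotdat T v) -> reaches T O' u.
Proof.
move=> basO reach_v forthA backA precOO'.
elim=> {u} /= [u|u w|u|u]; have [->|uv] := eqVneq u v => //.
- by move=> _ vA _; apply: reach_v.
- by move=> ubas uA _; apply: reach_bas => //; apply: forthA.
- move=> uor uw _ IHw uq; exact: reach_or uor uw (IHw (quotdat_kid uq uv uw)).
- move=> uand _ IH uq; apply: reach_and => // w uw; exact: IH (quotdat_kid uq uv uw).
move=> usand _ IH + uq; rewrite /sand_ok /= (negbTE uv) => sandu.
apply: reach_sand => // [w uw | i ilt a a' aA a'A aB a'B].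
  exact: IH (quotdat_kid uq uv uw).
have Bq j x : (j < size (kids T u))%N -> x \in aset O' ->
    x \in Bset T (nth u (kids T u) j) ->
    collapse T v x \in Bset (quotdat T v) (nth u (kids T u) j).
  move=> jlt xA xB; rewrite /Bset in_setI (subsetP basO) ?backA // andbT.
  exact: desc_quotdat_collapse (quotdat_kid uq uv (mem_nth u jlt)) xB.
apply: precOO' => //; apply: (sandu i ilt _ _ (backA a aA) (backA a' a'A)).
- exact: Bq (ltnW ilt) aA aB.
- exact: Bq ilt a'A a'B.
Qed.

End Module.

Lemma min_time_witness (R : realType) (N : finType) (T : dat N) (d : N -> R) :
  (min_time T d < +oo)%E ->
  exists2 O, successful T O & min_time T d = (attack_time O d)%:E.
Proof.
suff [->|//] : min_time T d = +oo%E \/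
    exists2 O, successful T O & min_time T d = (attack_time O d)%:E.
  by rewrite ltxx.
rewrite /min_time; elim/big_ind: _ => [|x y hx hy|O /asboolP sO].
- by left.
- by rewrite /Order.min; case: ifP.
- by right; exists O.
Qed.

Section SubstAttack.
Variables (N : finType) (T : dat N) (v : N) (O Ov : attack N).
Implicit Types C D : {set N}.

Definition subst_aset : {set N} :=
  [set x | (x \in aset O) && (x != v) || (x \in aset Ov) && (v \in aset O)].

Definition subst_attack : attack N :=
  (subst_aset, [set p : N * N | [&& p.1 \in subst_aset, p.2 \in subst_aset &
     if (p.1 \in desc T v) && (p.2 \in desc T v) then prec Ov p.1 p.2
     else prec O (collapse T v p.1) (collapse T v p.2)]]).

Lemma prec_subst a b : prec subst_attack a b =
  [&& a \in subst_aset, b \in subst_aset &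
   if (a \in desc T v) && (b \in desc T v) then prec Ov a b
   else prec O (collapse T v a) (collapse T v b)].
Proof. by rewrite /prec inE. Qed.

Hypotheses (wfT : wf_dat T) (modv : is_module T v)
  (attO : is_attack (quotdat T v) O) (attOv : is_attack (subdat T v) Ov).

Lemma aset_quotdat a : a \in aset O -> a != v -> a \in bas T /\ a \notin desc T v.
Proof.
have [basO _ _ _] := attO; move=> /(subsetP basO) + av.
rewrite /bas !inE /= (negbTE av) orbF.
by case/andP=> /andP[-> ->] ->.
Qed.

Lemma aset_subdat a : a \in aset Ov -> a \in bas T /\ a \in desc T v.
Proof.
have [basOv _ _ _] := attOv; have [vT _ _] := modv.
move=> /(subsetP basOv); rewrite /bas !inE /= => /andP[va abas].
by rewrite abas va (connect_nodes wfT vT va).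
Qed.

Lemma subst_aset_desc a : a \in subst_aset -> a \in desc T v -> a \in aset Ov /\ v \in aset O.
Proof.
by rewrite inE => /orP[/andP[aO av] va | /andP[]//]; have [_ /negP] := aset_quotdat aO av.
Qed.

Lemma subst_aset_ndesc a : a \in subst_aset -> a \notin desc T v -> a \in aset O /\ a != v.
Proof.
by rewrite inE => /orP[/andP[]//| /andP[/aset_subdat[_ ->]]].
Qed.

Lemma subst_aset_bas : {subset subst_aset <= bas T}.
Proof.
move=> a aA; case: (boolP (a \in desc T v)) => va.
  by have [/aset_subdat[]] := subst_aset_desc aA va.
by have [aO av] := subst_aset_ndesc aA va; have [] := aset_quotdat aO av.
Qed.

Lemma collapse_subst_aset a : a \in subst_aset -> collapse T v a \in aset O.
Proof.
move=> aA; case: (boolP (a \in desc T v)) => va.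
  by rewrite collapse_desc //; have [] := subst_aset_desc aA va.
by rewrite collapse_ndesc //; have [] := subst_aset_ndesc aA va.
Qed.

Lemma subst_attack_is_attack : is_attack T subst_attack.
Proof.
have [_ _ irrO transO] := attO; have [_ _ irrOv transOv] := attOv.
split=> [|| a aA | a b c aA bA cA]; first exact/subsetP/subst_aset_bas.
- by apply/subsetP => -[a b]; rewrite !inE => /and3P[aA bA _]; rewrite aA bA.
- rewrite prec_subst aA andbb /=; case: ifP => va.
    by have [/irrOv] := subst_aset_desc aA va.
  exact/irrO/collapse_subst_aset.
rewrite !prec_subst aA bA cA /=.
have := collapse_subst_aset aA; have := collapse_subst_aset bA.
have := collapse_subst_aset cA; rewrite /collapse.
case: (boolP (a \in _)) => va; case: (boolP (b \in _)) => vb;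
  case: (boolP (c \in _)) => vc //= cO bO aO; try exact: transO.
- by apply: transOv; [case: (subst_aset_desc aA va) | case: (subst_aset_desc bA vb)
    | case: (subst_aset_desc cA vc)].
- by move=> vb' bv; case/negP: (irrO _ aO); apply: (transO _ _ _ aO bO aO vb' bv).
Qed.

Lemma subst_attack_successful :
  reaches (quotdat T v) O (Defs.root T) -> reaches (subdat T v) Ov v ->
  successful T subst_attack.
Proof.
have [vT _ _] := modv; have [basO _ irrO _] := attO.
move=> reachO reachOv; split; first exact: subst_attack_is_attack.
apply: (reaches_quotdat wfT modv basO) reachO (root_quotdat wfT modv).
- move=> vO; apply: (reaches_subdat wfT vT) reachOv (desc_refl _ _).
  + by move=> a aOv; rewrite inE aOv vO orbT.
  + move=> a b aOv bOv ab; rewrite prec_subst (aset_subdat aOv).2 (aset_subdat bOv).2.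
    by rewrite !inE aOv bOv vO !orbT.
  + by move=> a aA va; have [] := subst_aset_desc aA va.
- by move=> a aO av; rewrite inE aO av.
- exact: collapse_subst_aset.
- move=> a b aA bA ab; rewrite prec_subst aA bA /=; case: ifP => // /andP[va vb].
  move: ab; rewrite !collapse_desc //; have [_ /irrO] := subst_aset_desc aA va.
  by move/negbTE->.
Qed.

Lemma comparable_subst a b : a \in subst_aset -> b \in subst_aset ->
  ~~ ((a \in desc T v) && (b \in desc T v)) ->
  [|| a == b, prec subst_attack a b | prec subst_attack b a] =
  [|| collapse T v a == collapse T v b, prec O (collapse T v a) (collapse T v b)
    | prec O (collapse T v b) (collapse T v a)].
Proof.
move=> aA bA nab; rewrite !prec_subst aA bA /= (negbTE nab) eq_collapse //.
by rewrite andbC (negbTE nab).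
Qed.

Lemma chain_collapse (C' : {set N}) C :
  chain subst_attack C' -> C \subset collapse T v @: C' -> chain O C.
Proof.
move=> /chainP[sC'A cmpC'] /subsetP sCC'; apply/chainP; split.
  by move=> x /sCC'/imsetP[a aC' ->]; apply/collapse_subst_aset/sC'A.
move=> x y /sCC'/imsetP[a aC' ->] /sCC'/imsetP[b bC' ->].
have [/andP[va vb] | nab] := boolP ((a \in desc T v) && (b \in desc T v)).
  by rewrite !collapse_desc ?eqxx.
by rewrite -comparable_subst ?sC'A ?cmpC'.
Qed.

Lemma chain_subst C D (C' : {set N}) : chain O C -> chain Ov D ->
  {subset C' <= subst_aset} -> {in C', forall a, a \in desc T v -> a \in D} ->
  {in C', forall a, collapse T v a \in C} -> chain subst_attack C'.
Proof.
move=> /chainP[_ cmpC] /chainP[_ cmpD] sC'A sC'D sC'C; apply/chainP; split=> // a b aC' bC'.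
have [/andP[va vb] | nab] := boolP ((a \in desc T v) && (b \in desc T v)).
  by rewrite !prec_subst (sC'A a aC') (sC'A b bC') /= va vb cmpD ?sC'D.
by rewrite comparable_subst ?sC'A ?cmpC ?sC'C.
Qed.

Variables (R : realType) (d w : N -> R).
Hypotheses (w_v : w v = chain_time Ov d) (w_nv : forall a, a != v -> w a = d a).

Lemma chain_time_subst_le : chain_time subst_attack d <= chain_time O w.
Proof.
apply: chain_time_le (chain_time_ge0 _ _) _ => C' chC'.
have /chainP[sC'A cmpC'] := chC'.
have chC'v : chain Ov (C' :&: desc T v).
  apply/chainP; split=> [a /setIP[aC' va] | a b /setIP[aC' va] /setIP[bC' vb]].
    by have [] := subst_aset_desc (sC'A a aC') va.
  by move: (cmpC' a b aC' bC'); rewrite !prec_subst (sC'A a aC') (sC'A b bC') /= va vb.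
have sum_out : \sum_(a in C' :\: desc T v) d a = \sum_(a in C' :\: desc T v) w a.
  apply: eq_bigr => a /setDP[_ va]; rewrite w_nv //.
  by apply: contraNneq va => ->; apply: desc_refl.
have out_sub : C' :\: desc T v \subset collapse T v @: C'.
  by apply/subsetP => a /setDP[aC' va]; apply/imsetP; exists a; rewrite ?collapse_ndesc.
rewrite (big_setID (desc T v)) /= sum_out.
have [-> | [s /setIP[sC' vs]]] := set_0Vmem (C' :&: desc T v).
  by rewrite big_set0 add0r; apply/sum_le_chain_time/(chain_collapse chC' out_sub).
have chC : chain O (v |: (C' :\: desc T v)).
  apply: chain_collapse chC' _; rewrite subUset out_sub andbT sub1set.
  by apply/imsetP; exists s; rewrite ?collapse_desc.
apply: le_trans (sum_le_chain_time w chC).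
rewrite big_setU1 /= ?in_setD ?desc_refl // w_v lerD2r.
exact: sum_le_chain_time.
Qed.

Lemma chain_time_subst_ge : chain_time O w <= chain_time subst_attack d.
Proof.
apply: chain_time_le (chain_time_ge0 _ _) _ => C chC.
have /chainP[sCA _] := chC.
have Cnv a : a \in C -> a != v -> a \in subst_aset /\ a \notin desc T v.
  move=> aC av; have [_ nva] := aset_quotdat (sCA a aC) av.
  by rewrite inE sCA ?av.
have [vC | nvC] := boolP (v \in C); last first.
  have chC' : chain subst_attack C.
    apply: (chain_subst chC (chain0 Ov)) => a aC;
      have av : a != v by apply: contraNneq nvC => <-.
    - by have [] := Cnv a aC av.
    - by have [_ /negP] := Cnv a aC av.
    - by have [_ /collapse_ndesc->] := Cnv a aC av.
  rewrite (eq_bigr d) => [|a aC]; first exact: sum_le_chain_time.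
  by rewrite w_nv //; apply: contraNneq nvC => <-.
have [D chD sumD] := chain_time_witness Ov d.
have /chainP[sDOv _] := chD.
have Dv a : a \in D -> a \in desc T v by move=> /sDOv/aset_subdat[].
have chC' : chain subst_attack (D :|: (C :\ v)).
  apply: (chain_subst chC chD) => a /setUP[aD | /setD1P[av aC]].
  - by rewrite inE (sDOv a aD) (sCA v vC) orbT.
  - by have [] := Cnv a aC av.
  - by [].
  - by have [_ /negP] := Cnv a aC av.
  - by rewrite collapse_desc ?Dv.
  - by have [_ /collapse_ndesc->] := Cnv a aC av.
have disjD : [disjoint D & C :\ v].
  apply/pred0P => a /=; apply/andP => -[aD /setD1P[av aC]].
  by have [_ /negP] := Cnv a aC av; apply; apply: Dv.
apply: le_trans (sum_le_chain_time d chC').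
rewrite (big_setD1 v vC) /= w_v sumD.
have -> : \sum_(a in D :|: (C :\ v)) d a = \sum_(a in D) d a + \sum_(a in C :\ v) d a.
  by rewrite -bigU //; apply: eq_bigl => a; rewrite !inE.
by rewrite lerD2l (eq_bigr d) => [|a /setD1P[av _]]; rewrite ?w_nv.
Qed.

End SubstAttack.

Theorem mainTheorem10 (R : realType) (N : finType) (T : dat N) (d : N -> R) (v : N) :
  wf_dat T ->
  (forall a, a \in bas T -> 0 <= d a) ->
  is_module T v ->
  (min_time (subdat T v) d < +oo)%E ->
  forall O : attack N, successful (quotdat T v) O ->
  exists O' : attack N, successful T O' /\
    attack_time O' d = attack_time O (dur_quot T v d).
Proof.
move=> wfT d_ge0 modv mt_fin O [attO reachO].
have [Ov [attOv reachOv] mtE] := min_time_witness mt_fin.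
have dur_v : dur_quot T v d v = chain_time Ov d.
  rewrite /dur_quot eqxx mtE /=; apply: attack_time_chain_time => a.
  by move=> /(aset_subdat wfT modv attOv)[/d_ge0].
have dur_nv a : a != v -> dur_quot T v d a = d a by rewrite /dur_quot => /negbTE->.
exists (subst_attack T v O Ov); split; first exact: subst_attack_successful.
rewrite !attack_time_chain_time; first last.
- by move=> a /(subst_aset_bas wfT modv attO attOv)/d_ge0.
- move=> a aO; have [-> | av] := eqVneq a v; first by rewrite dur_v chain_time_ge0.
  by rewrite dur_nv //; apply/d_ge0; have [] := aset_quotdat attO aO av.
by apply/le_anti; rewrite chain_time_subst_le ?chain_time_subst_ge.
Qed.
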